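(* Under the partial cost model, for every positive integer $k$ there is a request sequence $\sigma$ on a list of two items with $\mathrm{TS}(\sigma)=\mathrm{MTFO}(\sigma)=\mathrm{MTFE}(\sigma)=10k$ and $\mathrm{OPT}(\sigma)\le 6k$; in particular each of TS, MTFO and MTFE has cost at least $\frac{5}{3}\mathrm{OPT}(\sigma)$ on these sequences. (Hence the bound $\frac53$ of the best of the three algorithms is tight in the partial cost model.)
   Context: Static list update: serving a request to the item at position $i$ costs $i-1$ (partial cost model); the accessed item may be moved closer to the front for free; two adjacent items may be swapped at cost $1$. $A(\sigma)$ is the total cost of algorithm $A$ and $\mathrm{OPT}(\sigma)$ the minimum cost of any offline algorithm from the same initial list. MTFO moves a requested item to the front on the 1st, 3rd, 5th, ... request to that item; MTFE on the 2nd, 4th, 6th, ... request; otherwise they leave it in place. TS (Timestamp): on a request to item $x$, if $x$ has been requested before and some item preceding $x$ has been requested at most once since the previous request to $x$, then $x$ is moved to immediately in front of the frontmost such item; otherwise nothing moves. These three algorithms make no paid exchanges. *)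

From mathcomp Require Import all_boot.
Set Implicit Arguments. Unset Strict Implicit. Unset Printing Implicit Defensive.

Section ListUpdate.
Variable T : eqType.

(* Lists are [seq T]; positions are 0-based, so serving a request to the
   item at (1-based) position i costs i-1 = [index x L]  (partial cost model). *)

Definition move_to (x : T) (j : nat) (L : seq T) : seq T :=
  let r := rem x L in take j r ++ x :: drop j r.

(* Paid exchange of the adjacent items at (0-based) positions i and i+1
   (a no-op if i+1 is out of range). *)
Definition swap_adj (L : seq T) (i : nat) : seq T :=
  take i L ++ rev (take 2 (drop i L)) ++ drop i.+2 L.

(* MTFO (b = true) / MTFE (b = false): on a request to x that is the
   c-th request to x (c >= 1), move x to the front iff odd c = b.
   h = past requests (in order). Returns the total cost. *)
Fixpoint mtf_parity_cost (b : bool) (h L sigma : seq T) : nat :=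
  match sigma with
  | [::] => 0
  | x :: sigma' =>
      let c := (count_mem x h).+1 in
      let L' := if odd c == b then move_to x 0 L else L in
      index x L + mtf_parity_cost b (rcons h x) L' sigma'
  end.

Definition MTFO (L0 sigma : seq T) : nat := mtf_parity_cost true [::] L0 sigma.
Definition MTFE (L0 sigma : seq T) : nat := mtf_parity_cost false [::] L0 sigma.

(* TS: if x was requested before and some item preceding x has been
   requested at most once since the previous request to x, move x to
   immediately in front of the frontmost such item. *)
Definition ts_update (h L : seq T) (x : T) : seq T :=
  if x \in h then
    let since := take (index x (rev h)) (rev h) in
    let cands := [seq y <- take (index x L) L | count_mem y since <= 1] in
    if cands is y :: _ then move_to x (index y L) L else L
  else L.

Fixpoint ts_cost (h L sigma : seq T) : nat :=
  match sigma with
  | [::] => 0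
  | x :: sigma' => index x L + ts_cost (rcons h x) (ts_update h L x) sigma'
  end.

Definition TS (L0 sigma : seq T) : nat := ts_cost [::] L0 sigma.

(* A general offline algorithm: for each request, a sequence of paid adjacent
   exchanges (positions), performed before serving (cost 1 each), then the
   request is served, then the accessed item is moved for free to position
   min j (its current position), i.e. closer to the front. *)
Definition offline_step := (seq nat * nat)%type.

Fixpoint offline_cost (L sigma : seq T) (A : seq offline_step) : nat :=
  match sigma, A with
  | x :: sigma', (sw, j) :: A' =>
      let L1 := foldl swap_adj L sw in
      size sw + index x L1
        + offline_cost (move_to x (minn j (index x L1)) L1) sigma' A'
  | _, _ => 0
  end.

Definition OPT_le (L0 sigma : seq T) (n : nat) : Prop :=
  exists A : seq offline_step, size A = size sigma /\ offline_cost L0 sigma A <= n.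

End ListUpdate.

From mathcomp Require Import all_boot.
Set Implicit Arguments. Unset Strict Implicit. Unset Printing Implicit Defensive.

(* Take the list [a; b] (a = false in front, b = true) and the block
     w = a b a a a b a b a b a b a b a a      (16 requests, six to b),
   and let sigma = w^k.  A direct evaluation shows that each of TS, MTFO and
   MTFE pays 10 on every copy of w and ends the copy with the list [a; b]
   again, while the static offline algorithm that never moves anything pays
   one per request to b, i.e. 6 per copy. *)

Definition repeat_block (T : Type) (k : nat) (w : seq T) : seq T :=
  flatten (nseq k w).

Lemma repeat_blockS (T : Type) (k : nat) (w : seq T) :
  repeat_block k.+1 w = w ++ repeat_block k w.
Proof. by []. Qed.

Section Composition.
Variable T : eqType.
Implicit Types (h L s p w : seq T) (x : T).

Fixpoint ts_final h L s : seq T :=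
  if s is x :: s' then ts_final (rcons h x) (ts_update h L x) s' else L.

Lemma ts_cost_cat h L (s1 s2 : seq T) :
  ts_cost h L (s1 ++ s2) = ts_cost h L s1 + ts_cost (h ++ s1) (ts_final h L s1) s2.
Proof.
elim: s1 h L => [|x s1 IH] h L /=; first by rewrite cats0.
by rewrite IH addnA cat_rcons.
Qed.

Fixpoint mtf_final (b : bool) h L s : seq T :=
  if s is x :: s' then
    mtf_final b (rcons h x)
      (if odd (count_mem x h).+1 == b then move_to x 0 L else L) s'
  else L.

Lemma mtf_cost_cat b h L (s1 s2 : seq T) :
  mtf_parity_cost b h L (s1 ++ s2) =
  mtf_parity_cost b h L s1 + mtf_parity_cost b (h ++ s1) (mtf_final b h L s1) s2.
Proof.
elim: s1 h L => [|x s1 IH] h L /=; first by rewrite cats0.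
by rewrite IH addnA cat_rcons.
Qed.

(* TS only inspects the requests since the last request to [x], so a prefix
   of the history that lies before a request to [x] is irrelevant. *)
Lemma ts_update_recent (h0 : seq T) p L x :
  x \in p -> ts_update (h0 ++ p) L x = ts_update p L x.
Proof.
move=> xp; have xrp : x \in rev p by rewrite mem_rev.
rewrite /ts_update mem_cat xp orbT rev_cat index_cat xrp take_cat.
by rewrite size_rev -(size_rev p) index_mem xrp.
Qed.

Lemma ts_cost_recent (h0 : seq T) p L s :
  {subset s <= p} -> ts_cost (h0 ++ p) L s = ts_cost p L s.
Proof.
elim: s p L => [|x s IH] p L //= sp.
have xp : x \in p by apply: sp; rewrite mem_head.
rewrite ts_update_recent // rcons_cat IH // => y ys.
by rewrite mem_rcons inE sp ?orbT // inE ys orbT.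
Qed.

(* MTFO/MTFE only see request counts modulo 2, so a history prefix in
   which every item occurs an even number of times is irrelevant. *)
Lemma mtf_cost_even_prefix b (h0 : seq T) p L s :
  (forall x, ~~ odd (count_mem x h0)) ->
  mtf_parity_cost b (h0 ++ p) L s = mtf_parity_cost b p L s.
Proof.
move=> even_h0; elim: s p L => [|x s IH] p L //=.
by rewrite count_cat oddD (negPf (even_h0 x)) rcons_cat IH.
Qed.

Lemma ts_cost_repeat w L k :
  ts_final w L w = L -> ts_cost w L (repeat_block k w) = k * ts_cost w L w.
Proof.
move=> w_stable; elim: k => [|k IH] //.
rewrite repeat_blockS ts_cost_cat w_stable ts_cost_recent ?IH ?mulSn //.
by move=> x /flattenP [v /nseqP [-> _]].
Qed.

Lemma TS_repeat w L k :
  ts_final [::] L w = L -> ts_final w L w = L ->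
  TS L (repeat_block k.+1 w) = ts_cost [::] L w + k * ts_cost w L w.
Proof.
move=> first_stable w_stable.
by rewrite /TS repeat_blockS ts_cost_cat first_stable ts_cost_repeat.
Qed.

Lemma mtf_cost_repeat b w L k :
  (forall x, ~~ odd (count_mem x w)) -> mtf_final b [::] L w = L ->
  mtf_parity_cost b [::] L (repeat_block k w) = k * mtf_parity_cost b [::] L w.
Proof.
move=> even_w w_stable; elim: k => [|k IH] //.
rewrite repeat_blockS mtf_cost_cat w_stable -[_ ++ w]cats0.
by rewrite mtf_cost_even_prefix // IH mulSn.
Qed.

Lemma move_to_index x L : x \in L -> move_to x (index x L) L = L.
Proof.
elim: L => [|y L IH] //; rewrite inE /move_to /=.
have [-> _ | yx /= xL] := eqVneq y x; first by rewrite take0 drop0.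
by rewrite -/(move_to x (index x L) L) IH.
Qed.

Lemma static_cost L s :
  {subset s <= L} ->
  offline_cost L s (nseq (size s) ([::], size L)) = \sum_(x <- s) index x L.
Proof.
elim: s => [|x s IH] sL; first by rewrite big_nil.
have xL : x \in L by apply: sL; rewrite mem_head.
rewrite /= big_cons (minn_idPr (index_size x L)) move_to_index // IH // => y ys.
by apply: sL; rewrite inE ys orbT.
Qed.

Lemma OPT_le_static L s :
  {subset s <= L} -> OPT_le L s (\sum_(x <- s) index x L).
Proof.
by move=> sL; exists (nseq (size s) ([::], size L)); rewrite size_nseq static_cost.
Qed.

Lemma sum_index_repeat L w k :
  \sum_(x <- repeat_block k w) index x L = k * \sum_(x <- w) index x L.
Proof. by elim: k => [|k IH]; rewrite ?big_nil // repeat_blockS big_cat IH mulSn. Qed.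

End Composition.

Definition L_ab : seq bool := [:: false; true].

Definition block : seq bool :=
  [:: false; true; false; false; false; true; false; true;
      false; true; false; true; false; true; false; false].

Lemma block_even (x : bool) : ~~ odd (count_mem x block).
Proof. by case: x. Qed.

Lemma block_TS :
  [/\ ts_final [::] L_ab block = L_ab, ts_final block L_ab block = L_ab,
      ts_cost [::] L_ab block = 10 & ts_cost block L_ab block = 10].
Proof. by split; vm_compute. Qed.

Lemma block_MTF (b : bool) :
  mtf_final b [::] L_ab block = L_ab /\ mtf_parity_cost b [::] L_ab block = 10.
Proof. by case: b; split; vm_compute. Qed.

Lemma block_static : \sum_(x <- block) index x L_ab = 6.
Proof. by rewrite unlock. Qed.

Theorem theorem4 (k : nat) (hk : 0 < k) :
  exists (L0 sigma : seq bool),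
    perm_eq L0 [:: false; true] /\
    TS L0 sigma = 10 * k /\ MTFO L0 sigma = 10 * k /\ MTFE L0 sigma = 10 * k /\
    OPT_le L0 sigma (6 * k).
Proof.
exists L_ab, (repeat_block k block).
have MTF_cost b : mtf_parity_cost b [::] L_ab (repeat_block k block) = 10 * k.
  have [stable cost] := block_MTF b.
  by rewrite (mtf_cost_repeat _ block_even stable) cost mulnC.
have TS_cost : TS L_ab (repeat_block k block) = 10 * k.
  have [first_stable stable first_cost cost] := block_TS.
  have [k' ->] : exists k', k = k'.+1 by exists k.-1; rewrite prednK.
  by rewrite (TS_repeat _ first_stable stable) first_cost cost mulnC mulnS.
have OPT_cost : OPT_le L_ab (repeat_block k block) (6 * k).
  rewrite mulnC -block_static -sum_index_repeat.
  by apply: OPT_le_static => -[].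
split; first by [].
split; first exact: TS_cost.
split; first exact: (MTF_cost true).
split; first exact: (MTF_cost false).
exact: OPT_cost.
Qed.
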